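(* Let $f:\mathbb{R}^n\to\mathbb{R}$ be $r+1$ times continuously differentiable for some integer $r\ge1$, with $\nabla f$ Lipschitz continuous with constant $L$. Let $x^*$ satisfy $\nabla f(x^* )=0$, and suppose that $\nabla^2 f(x^* )$ has exactly $p$ negative eigenvalues, where $1\le p<n$, and at least one positive eigenvalue; let $\lambda_1>0$ be the largest eigenvalue of $\nabla^2 f(x^* )$. Let \[ 0<\alpha<\frac{4}{\lambda_1},\qquad \beta\in\Big(\max\big(-1+\tfrac{\alpha\lambda_1}{2},\,0\big),\,1\Big), \] and let \[ DG(x^*,x^* )=\begin{bmatrix}(1+\beta)I-\alpha\nabla^2 f(x^* ) & -\beta I\\ I & 0\end{bmatrix}\in\mathbb{R}^{2n\times 2n}. \] Then there exist matrices $\tilde V_s\in\mathbb{R}^{2n\times(2n-p)}$ and $\tilde V_u\in\mathbb{R}^{2n\times p}$ such that: (a) the $2n\times 2n$ matrix $\tilde V=[\tilde V_s\,|\,\tilde V_u]$ is nonsingular; (b) the column space of $\tilde V_s$ is invariant under $DG(x^*,x^* )$, and all eigenvalues of the restriction of $DG(x^*,x^* )$ to this subspace have magnitude less than or equal to $1$; (c) the column space of $\tilde V_u$ is invariant under $DG(x^*,x^* )$, and all eigenvalues of the restriction of $DG(x^*,x^* )$ to this subspace have magnitude greater than $1$.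
   Context: $DG(x^*,x^* )$ is the Jacobian at $(x^*,x^* )$ of the heavy-ball map $G(z_1,z_2)=(z_1-\alpha\nabla f(z_1)+\beta(z_1-z_2),\,z_1)$ on $\mathbb{R}^n\times\mathbb{R}^n$. Eigenvalues may be complex; ''magnitude'' means complex modulus. *)

From HB Require Import structures.
From mathcomp Require Import all_boot all_order all_algebra.
From mathcomp Require Import all_classical all_reals all_analysis.
From mathcomp Require Import complex.
Set Implicit Arguments. Unset Strict Implicit. Unset Printing Implicit Defensive.
Import Order.TTheory GRing.Theory Num.Theory.
Import numFieldNormedType.Exports.
Local Open Scope ring_scope.

Definition evec (R : realType) (n : nat) (i : 'I_n) : 'rV[R]_n := delta_mx 0 i.

Definition pderiv (R : realType) (n : nat) (i : 'I_n) (g : 'rV[R]_n -> R) (x : 'rV[R]_n) : R :=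
  'D_(evec R i) g x.

Fixpoint Ck (R : realType) (n : nat) (k : nat) (g : 'rV[R]_n -> R) : Prop :=
  match k with
  | 0 => continuous g
  | k'.+1 => continuous g /\
             (forall (i : 'I_n) (x : 'rV[R]_n), derivable g x (evec R i)) /\
             (forall i : 'I_n, Ck k' (pderiv i g))
  end.

Definition grad (R : realType) (n : nat) (f : 'rV[R]_n -> R) (x : 'rV[R]_n) : 'rV[R]_n :=
  \row_i pderiv i f x.
Definition hessian (R : realType) (n : nat) (f : 'rV[R]_n -> R) (x : 'rV[R]_n) : 'M[R]_n :=
  \matrix_(i, j) pderiv j (pderiv i f) x.

Definition enorm (R : realType) (n : nat) (v : 'rV[R]_n) : R :=
  Num.sqrt (\sum_i v 0 i ^+ 2).

(* Jacobian of the heavy-ball map at (xs, xs) *)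
Definition DG (R : realType) (n : nat) (alpha beta : R) (H : 'M[R]_n) : 'M[R]_(n + n) :=
  block_mx ((1 + beta)%:M - alpha *: H) (- beta%:M) 1%:M 0.

Definition ceig (R : realType) (m : nat) (B : 'M[R]_m) (z : R[i]) : bool :=
  root (map_poly (fun a : R => (a%:C)%C) (char_poly B)) z.

(* In block form,
     det (z - DG) = z^n det ((z - (1 + beta) + beta / z) + alpha H),
   so the characteristic polynomial of DG is the product, over the eigenvalues
   lam_i of H, of  z^2 - (1 + beta - alpha lam_i) z + beta.  For lam_i < 0 this
   quadratic has one real root above 1 and one in [0, 1]; for lam_i >= 0 the
   bound alpha lam_i < 2 + 2 beta, a consequence of beta > -1 + alpha lam1 / 2,
   keeps both roots in the closed unit disk.  Hence char DG = Ps * Pu, where Pu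
   has degree p and carries exactly the roots outside the disk, so Ps and Pu are
   coprime.  The primary decomposition R^2n = ker Ps(DG) + ker Pu(DG) gives the
   two invariant subspaces, on which DG has characteristic polynomials Ps and
   Pu. *)

From HB Require Import structures.
From mathcomp Require Import all_boot all_order all_algebra.
From mathcomp Require Import all_classical all_reals all_analysis.
From mathcomp Require Import complex.
From mathcomp Require Import ring lra zify.
Import Order.TTheory GRing.Theory Num.Theory.
Import numFieldNormedType.Exports.
Local Open Scope ring_scope.
Set Implicit Arguments. Unset Strict Implicit. Unset Printing Implicit Defensive.

Local Notation "p ^C" := (map_poly (real_complex _) p) : ring_scope.

Lemma size_dvdp_mul_eq (F : fieldType) (p1 p2 q1 q2 : {poly F}) :
  p1 * p2 = q1 * q2 -> q1 * q2 != 0 -> p1 %| q1 -> p2 %| q2 ->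
  size p1 = size q1.
Proof.
move=> e nzq d1 d2; have nzp : p1 * p2 != 0 by rewrite e.
move: nzp nzq; rewrite !mulf_eq0 !negb_or => /andP [nzp1 nzp2] /andP [nzq1 nzq2].
have := congr1 (fun p : {poly F} => size p) e; rewrite /= !size_mul //.
have := dvdp_leq nzq1 d1; have := dvdp_leq nzq2 d2.
move: nzp1 nzp2; rewrite -!size_poly_gt0.
by move: (size p1) (size p2) (size q1) (size q2) => a b c d; lia.
Qed.

Lemma poly_eq_nonzero (R : numDomainType) (p q : {poly R}) :
  (forall z, z != 0 -> p.[z] = q.[z]) -> p = q.
Proof.
move=> pq; apply/eqP; rewrite -subr_eq0; apply/negPn/negP => nz.
pose rs : seq R := [seq i.+1%:R | i <- iota 0 (size (p - q))].
have rs_roots : all (root (p - q)) rs.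
  apply/allP => x /mapP [i _ ->].
  by rewrite /root hornerD hornerN pq ?pnatr_eq0 ?subrr.
have rs_uniq : uniq rs.
  by rewrite map_inj_uniq ?iota_uniq // => i j /eqP; rewrite eqr_nat => /eqP [].
by have := max_poly_roots nz rs_roots rs_uniq; rewrite size_map size_iota ltnn.
Qed.

Lemma coprimep_complexP (R : rcfType) (P Q : {poly R}) :
  reflect (forall z : R[i], root P^C z -> ~~ root Q^C z) (coprimep P Q).
Proof.
rewrite -(coprimep_map (real_complex R)).
apply: (iffP idP) => [cPQ z Pz | sepPQ]; first exact: coprimep_root cPQ Pz.
apply/negPn/negP => /closed_rootP [z]; rewrite root_gcd => /andP [Pz Qz].
by have := sepPQ z Pz; rewrite Qz.
Qed.

Lemma horner_char_poly (R : comNzRingType) n (A : 'M[R]_n) z :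
  (char_poly A).[z] = \det (z%:M - A).
Proof.
rewrite /char_poly -horner_evalE -det_map_mx; congr (\det _).
apply/matrixP => i j; rewrite !mxE /= horner_evalE.
by rewrite hornerD hornerN hornerMn hornerX hornerC.
Qed.

Lemma char_poly_trmx (R : comNzRingType) n (A : 'M[R]_n) :
  char_poly A^T = char_poly A.
Proof.
rewrite /char_poly -det_tr; congr (\det _).
by apply/matrixP => i j; rewrite !mxE eq_sym.
Qed.

Lemma char_poly_col_mx_stable (F : fieldType) m k1 k2 (e : (k1 + k2)%N = m)
    (A : 'M[F]_m) (V1 : 'M[F]_(k1, m)) (V2 : 'M[F]_(k2, m))
    (B1 : 'M[F]_k1) (B2 : 'M[F]_k2) :
  V1 *m A = B1 *m V1 -> V2 *m A = B2 *m V2 -> \rank (col_mx V1 V2) = m ->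
  char_poly A = char_poly B1 * char_poly B2.
Proof.
case: m / e A V1 V2 => A V1 V2 hV1 hV2 rkV.
set W := col_mx V1 V2; set B := block_mx B1 0 0 B2.
have Wu : W \in unitmx by rewrite -row_full_unit /row_full rkV.
have hA : A = invmx W *m B *m W.
  rewrite -mulmxA mul_block_col !mul0mx addr0 add0r -hV1 -hV2 -mul_col_mx.
  by rewrite mulKmx.
have WV : map_mx polyC (invmx W) *m map_mx polyC W = 1%:M.
  by rewrite -map_mxM mulVmx // map_mx1.
have hAX : char_poly_mx A =
    map_mx polyC (invmx W) *m char_poly_mx B *m map_mx polyC W.
  rewrite /char_poly_mx hA !map_mxM mulmxBr mulmxBl mul_mx_scalar -scalemxAl WV.
  by rewrite scalemx1.
rewrite /char_poly hAX !det_mulmx mulrAC -det_mulmx WV det1 mul1r.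
rewrite /char_poly_mx map_block_mx !map_mx0 (scalar_mx_block k1 k2) opp_block_mx.
by rewrite add_block_mx !oppr0 !addr0 det_ublock.
Qed.

Lemma root_char_poly_kermxpoly1 (F K : fieldType) (f : {rmorphism F -> K})
    k (B : 'M[F]_k) (P : {poly F}) z :
  (1%:M <= kermxpoly B P)%MS ->
  root (map_poly f (char_poly B)) z -> root (map_poly f P) z.
Proof.
case: k B => [|k] B /sub_kermxP; rewrite mul1mx => BP0.
  by rewrite /char_poly det_mx00 rmorph1 (negbTE (root1 _)).
rewrite map_char_poly -root_mxminpoly mxminpoly_map => /root_dvdp; apply.
by rewrite dvdp_map; apply: mxminpoly_min.
Qed.

Lemma stablemx_kermxpoly (F : fieldType) m (A : 'M[F]_m) (P : {poly F}) :
  stablemx (kermxpoly A P) A.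
Proof. exact: comm_mx_stable_kermxpoly. Qed.

Lemma restrictmx_kermxpoly1 (F : fieldType) m (A : 'M[F]_m) (P : {poly F}) :
  (1%:M <= kermxpoly (restrictmx (kermxpoly A P) A) P)%MS.
Proof.
by rewrite sub_kermxpoly_conjmx ?stablemx_row_base ?stablemx_kermxpoly
  ?row_base_free // mul1mx eq_row_base submx_refl.
Qed.

Lemma restrictmx_mul (F : fieldType) m (A : 'M[F]_m) (V : 'M[F]_m) :
  stablemx V A -> row_base V *m A = restrictmx V A *m row_base V.
Proof. by move=> VA; rewrite mulmxKpV // stablemx_row_base. Qed.

Lemma kermxpoly_char_poly_coprime (F : fieldType) m (A : 'M[F]_m)
    (P Q : {poly F}) :
  char_poly A = P * Q -> coprimep P Q ->
  (kermxpoly A P + kermxpoly A Q :=: 1%:M)%MS.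
Proof.
move=> hA cPQ; apply: eqmx_trans (eqmx_sym (kermxpolyM A cPQ)) _.
case: m A hA => [|m] A hA; first by rewrite !thinmx0.
by rewrite -hA; apply/kermxpoly_min/mxminpoly_dvd_char.
Qed.

Lemma kermxpoly_restrict_split (R : rcfType) m (A : 'M[R]_m) (P Q : {poly R}) k :
  char_poly A = P * Q -> coprimep P Q -> size P = k.+1 ->
  exists (V : 'M[R]_(k, m)) (B : 'M[R]_k), [/\ V *m A = B *m V,
    (V :=: kermxpoly A P)%MS & forall z, root (char_poly B)^C z -> root P^C z].
Proof.
move=> hA cPQ sP; set KP := kermxpoly A P; set KQ := kermxpoly A Q.
have full := kermxpoly_char_poly_coprime hA cPQ.
have rkPQ : (\rank KP + \rank KQ)%N = m.
  by rewrite -mxrank_disjoint_sum ?mxdirect_kermxpoly // full mxrank1.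
set BP := restrictmx KP A; set BQ := restrictmx KQ A.
have rootBP :=
  root_char_poly_kermxpoly1 (f := real_complex R) (restrictmx_kermxpoly1 A P).
have rootBQ :=
  root_char_poly_kermxpoly1 (f := real_complex R) (restrictmx_kermxpoly1 A Q).
have hBPQ : char_poly A = char_poly BP * char_poly BQ.
  apply: (char_poly_col_mx_stable rkPQ (V1 := row_base KP) (V2 := row_base KQ)).
  - exact/restrictmx_mul/stablemx_kermxpoly.
  - exact/restrictmx_mul/stablemx_kermxpoly.
  by rewrite -addsmxE (adds_eqmx (eq_row_base _) (eq_row_base _)) full mxrank1.
(* The restrictions have only roots of P, resp. Q, so coprimality makes each
   characteristic polynomial divide its own factor; comparing degrees then
   gives the rank. *)
have dvdP : char_poly BP %| P.
  rewrite -(@Gauss_dvdpl _ _ Q) -?hA ?hBPQ ?dvdp_mulr //.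
  by apply/coprimep_complexP => z /rootBP; apply/coprimep_complexP.
have dvdQ : char_poly BQ %| Q.
  rewrite -(@Gauss_dvdpr _ _ P) -?hA ?hBPQ ?dvdp_mull //.
  apply/coprimep_complexP => z /rootBQ.
  by apply/coprimep_complexP; rewrite coprimep_sym.
have := size_dvdp_mul_eq (etrans (esym hBPQ) hA) _ dvdP dvdQ.
rewrite -hA size_char_poly sP monic_neq0 ?char_poly_monic // => /(_ isT) [rkP].
clear sP; case: k / rkP.
exists (row_base KP), BP; split => //; last exact: eq_row_base.
exact/restrictmx_mul/stablemx_kermxpoly.
Qed.

Lemma invariant_subspace_split (R : realType) m k (M : 'M[R]_m) (P Q : {poly R}) :
  char_poly M = P * Q -> coprimep P Q -> size Q = k.+1 ->
  exists (Vs : 'M[R]_(m, m - k)) (Vu : 'M[R]_(m, k)),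
    [/\ \rank (row_mx Vs Vu) = m,
      exists2 Bs : 'M[R]_(m - k), M *m Vs = Vs *m Bs &
        forall z, ceig Bs z -> root P^C z &
      exists2 Bu : 'M[R]_k, M *m Vu = Vu *m Bu &
        forall z, ceig Bu z -> root Q^C z].
Proof.
move=> hM cPQ sQ; have hMt : char_poly M^T = P * Q by rewrite char_poly_trmx.
have sP : size P = (m - k).+1.
  have := monic_neq0 (char_poly_monic M).
  rewrite hM mulf_eq0 negb_or => /andP [nzP nzQ].
  have := size_char_poly M; rewrite hM size_mul // sQ addnS /=.
  by move: nzP; rewrite -size_poly_gt0; move: (size P) => s; lia.
have [VP [BP [hVP eqVP rootBP]]] := kermxpoly_restrict_split hMt cPQ sP.
have cQP : coprimep Q P by rewrite coprimep_sym.
have [VQ [BQ [hVQ eqVQ rootBQ]]] :=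
  kermxpoly_restrict_split (etrans hMt (mulrC P Q)) cQP sQ.
exists VP^T, VQ^T; split.
- rewrite -tr_col_mx mxrank_tr -addsmxE (adds_eqmx eqVP eqVQ).
  by rewrite kermxpoly_char_poly_coprime // mxrank1.
- exists BP^T; first by rewrite -trmx_mul -hVP trmx_mul trmxK.
  by move=> z; rewrite /ceig char_poly_trmx; apply: rootBP.
- exists BQ^T; first by rewrite -trmx_mul -hVQ trmx_mul trmxK.
  by move=> z; rewrite /ceig char_poly_trmx; apply: rootBQ.
Qed.

Lemma normcR (R : rcfType) (x : R) : `|x%:C%C| = `|x|%:C%C.
Proof. by rewrite normc_def /= expr0n addr0 sqrtr_sqr. Qed.

Lemma quadratic_real_roots (R : rcfType) (mu b : R) :
  0 < b -> b < 1 -> 1 + b < mu ->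
  let d := Num.sqrt (mu ^+ 2 - 4 * b) in
  [/\ 1 < (mu + d) / 2, 0 <= (mu - d) / 2 <= 1 &
    'X^2 - mu%:P * 'X + b%:P =
      ('X - ((mu + d) / 2)%:P) * ('X - ((mu - d) / 2)%:P)].
Proof.
move=> b0 b1 bmu d; have d0 : 0 <= d by apply: sqrtr_ge0.
have dd : d ^+ 2 = mu ^+ 2 - 4 * b by rewrite sqr_sqrtr //; nra.
split; [nra | apply/andP; split; nra |].
set zp := (mu + d) / 2; set zm := (mu - d) / 2.
have prod_roots : b = zp * zm.
  rewrite (_ : _ * _ = (mu ^+ 2 - d ^+ 2) / 4); last by rewrite /zp /zm; field.
  by rewrite dd; field.
have sum_roots : mu = zp + zm by rewrite /zp /zm; field.
rewrite [in LHS]sum_roots [in LHS]prod_roots (polyCD zp zm) (polyCM zp zm).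
by ring.
Qed.

Lemma quadratic_root_norm_le1 (R : rcfType) (mu b : R) (z : R[i]) :
  0 < b -> b < 1 -> - (1 + b) <= mu <= 1 + b ->
  root ('X^2 - mu%:P * 'X + b%:P)^C z -> `|z| <= 1.
Proof.
(* Real roots lie in [-1, 1] since the quadratic is positive beyond them;
   non-real roots are conjugate, with |z|^2 = b. *)
move=> b0 b1 /andP [mu_lo mu_hi].
rewrite /root !(rmorphB, rmorphD, rmorphM, rmorphXn) /= map_polyX !map_polyC /=.
rewrite !hornerE; case: z => x y.
rewrite eq_complex /= => /andP [/eqP re0 /eqP im0].
rewrite normc_def /= -[1]/(1%:C%C) lecR -sqrtr1 ler_sqrt ?ler01 //.
have : y * (2 * x - mu) = 0 by rewrite -im0; ring.
move/eqP; rewrite mulf_eq0 => /orP [/eqP y0 | /eqP e].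
  rewrite y0 expr0n addr0 in re0 *; rewrite mulr0 subr0 in re0.
  have hx : x * x - mu * x + b = 0 by rewrite -re0; ring.
  case: (lerP (x ^+ 2) 1) => // x2; exfalso.
  case: (lerP 0 x) => hx0; [have x1 : 1 < x by nra | have x1 : x < -1 by nra]; nra.
have hy : y ^+ 2 = b - x ^+ 2.
  by rewrite -[LHS]addr0 -re0 (_ : mu = 2 * x); [ring | lra].
by rewrite hy; lra.
Qed.

Lemma det_sub_DG (R : realType) n (H : 'M[R]_n) (alpha beta z : R) : z != 0 ->
  \det (z%:M - DG alpha beta H) =
  \det ((z - (1 + beta) + beta / z)%:M + alpha *: H) * z ^+ n.
Proof.
move=> z0; set M1 := (1 + beta)%:M - alpha *: H.
have -> : z%:M - DG alpha beta H = block_mx (z%:M - M1) beta%:M (- 1%:M) z%:M.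
  rewrite /DG (scalar_mx_block n n z) opp_block_mx add_block_mx.
  by rewrite !opprK !oppr0 !addr0 !add0r.
have elim_lower : block_mx (z%:M - M1) beta%:M (- 1%:M) z%:M *m
    block_mx 1%:M 0 z^-1%:M 1%:M =
    block_mx (z%:M - M1 + (beta / z)%:M) beta%:M 0 z%:M.
  rewrite mulmx_block !mulmx1 !mulmx0 !add0r -!scalar_mxM divff //.
  by rewrite addNr.
have := congr1 determinant elim_lower.
rewrite det_mulmx det_lblock !det1 !mulr1 det_ublock det_scalar => ->.
congr (\det _ * _); apply/matrixP => i j; rewrite !mxE.
by case: (i == j); rewrite ?mulr1n ?mulr0n; ring.
Qed.

Lemma char_poly_DG (R : realType) n (H : 'M[R]_n) (lam : 'I_n -> R)
    (alpha beta : R) :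
  alpha != 0 -> char_poly H = \prod_i ('X - (lam i)%:P) ->
  char_poly (DG alpha beta H) =
  \prod_i ('X^2 - (1 + beta - alpha * lam i)%:P * 'X + beta%:P).
Proof.
move=> a0 hH; apply: poly_eq_nonzero => z z0.
rewrite horner_char_poly det_sub_DG // horner_prod.
set c := z - (1 + beta) + beta / z.
have -> : c%:M + alpha *: H = (- alpha) *: ((- c / alpha)%:M - H).
  apply/matrixP => i j; rewrite !mxE.
  by case: (i == j); rewrite ?mulr1n ?mulr0n; field.
have pow_prod (x : R) : x ^+ n = \prod_(i < n) x by rewrite prodr_const card_ord.
rewrite detZ -horner_char_poly hH horner_prod !pow_prod -!big_split /=.
apply: eq_bigr => i _.
by rewrite !hornerE /c; field; rewrite ?a0 ?z0.
Qed.

Lemma char_poly_DG_split (R : realType) n (H : 'M[R]_n) (lam : 'I_n -> R)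
    (alpha beta : R) :
  char_poly H = \prod_i ('X - (lam i)%:P) ->
  0 < alpha -> 0 < beta -> beta < 1 -> (forall i, alpha * lam i < 2 + 2 * beta) ->
  exists Ps Pu : {poly R}, [/\ char_poly (DG alpha beta H) = Ps * Pu,
    size Pu = #|[set i | lam i < 0]|.+1,
    forall z, root Ps^C z -> `|z| <= 1 &
    forall z, root Pu^C z -> 1 < `|z|].
Proof.
move=> hH a0 b0 b1 lam_ub.
pose mu i := 1 + beta - alpha * lam i.
pose d i := Num.sqrt (mu i ^+ 2 - 4 * beta).
pose quad i : {poly R} := 'X^2 - (mu i)%:P * 'X + beta%:P.
have neg_split i : lam i < 0 -> [/\ 1 < (mu i + d i) / 2,
    0 <= (mu i - d i) / 2 <= 1 &
    quad i = ('X - ((mu i + d i) / 2)%:P) * ('X - ((mu i - d i) / 2)%:P)].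
  by move=> lam_neg; apply: quadratic_real_roots => //; rewrite /mu; nra.
pose N := [pred i | lam i < 0].
exists ((\prod_(i | N i) ('X - ((mu i - d i) / 2)%:P)) *
        \prod_(i | ~~ N i) quad i).
exists (\prod_(i | N i) ('X - ((mu i + d i) / 2)%:P)).
have root_linear (a : 'I_n -> R) z : root (\prod_(i | N i) ('X - (a i)%:P))^C z ->
    exists2 i, N i & z = (a i)%:C%C.
  rewrite rmorph_prod /root horner_prod => /prodf_eq0 [i Ni].
  by rewrite /= map_polyXsubC hornerXsubC subr_eq0 => /eqP ->; exists i.
split.
- rewrite (char_poly_DG _ _ hH) ?gt_eqF // (bigID N) /= mulrAC -big_split /=.
  by congr (_ * _); apply: eq_bigr => i /neg_split [_ _ e]; rewrite [RHS]mulrC -e.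
- by rewrite -big_filter size_prod_XsubC size_filter cardsE cardE /enum_mem
    size_filter.
- move=> z; rewrite rmorphM rootM.
  case/orP => [/root_linear [i /neg_split [_ lo _] ->] |].
    by rewrite normcR -(rmorph1 (real_complex R)) lecR ger0_norm; case/andP: lo.
  rewrite rmorph_prod /root horner_prod => /prodf_eq0 [i lam_nneg quad_root].
  apply: (quadratic_root_norm_le1 (mu := mu i) (b := beta)) => //.
  by move: lam_nneg (lam_ub i); rewrite /N /= -leNgt /mu => lam_nneg; nra.
- move=> z /root_linear [i /neg_split [hi _ _] ->].
  by rewrite normcR -(rmorph1 (real_complex R)) ltcR gtr0_norm // (lt_trans ltr01).
Qed.

Theorem theorem2p4 (R : realType) (n r p : nat) (f : 'rV[R]_n -> R) (L : R)
  (xs : 'rV[R]_n) (lam : 'I_n -> R) (lam1 alpha beta : R) :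
  (1 <= r)%N ->
  Ck r.+1 f ->
  (forall x y : 'rV[R]_n, enorm (grad f x - grad f y) <= L * enorm (x - y)) ->
  grad f xs = 0 ->
  (* lam lists the eigenvalues of the Hessian at xs, with multiplicity *)
  char_poly (hessian f xs) = \prod_(i < n) ('X - (lam i)%:P) ->
  #|[set i | lam i < 0]| = p ->
  (1 <= p < n)%N ->
  (exists i, 0 < lam i) ->
  (* lam1 is the largest eigenvalue *)
  (exists i, lam i = lam1) -> (forall i, lam i <= lam1) ->
  0 < alpha -> alpha < 4 / lam1 ->
  Num.max (-1 + alpha * lam1 / 2) 0 < beta -> beta < 1 ->
  exists (Vs : 'M[R]_(n + n, (n + n - p)%N)) (Vu : 'M[R]_(n + n, p)),
    \rank (row_mx Vs Vu) = (n + n)%N /\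
    (exists Bs : 'M[R]_(n + n - p),
       DG alpha beta (hessian f xs) *m Vs = Vs *m Bs /\
       forall z : R[i], ceig Bs z -> `|z| <= 1) /\
    (exists Bu : 'M[R]_p,
       DG alpha beta (hessian f xs) *m Vu = Vu *m Bu /\
       forall z : R[i], ceig Bu z -> 1 < `|z|).
Proof.
(* Only the Hessian enters DG. *)
move=> _ _ _ _ hH card_neg _ _ _ lam_le1 a0 _ beta_lb beta_ub.
have [beta_lam1 beta0] : -1 + alpha * lam1 / 2 < beta /\ 0 < beta.
  by move: beta_lb; rewrite gt_max => /andP [].
have lam_ub i : alpha * lam i < 2 + 2 * beta by have := lam_le1 i; nra.
have [Ps [Pu [hDG sPu rootPs rootPu]]] :=
  char_poly_DG_split hH a0 beta0 beta_ub lam_ub.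
have cPsPu : coprimep Ps Pu.
  apply/coprimep_complexP => z /rootPs z_le1.
  by apply/negP => /rootPu /lt_geF; rewrite z_le1.
rewrite card_neg in sPu.
have [Vs [Vu [rkV [Bs hBs rootBs] [Bu hBu rootBu]]]] :=
  invariant_subspace_split hDG cPsPu sPu.
exists Vs, Vu; split=> //; split.
- by exists Bs; split=> // z /rootBs /rootPs.
- by exists Bu; split=> // z /rootBu /rootPu.
Qed.
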